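(* The class of coherent sober spaces is projective: if $(p_{ij}\colon X_j\to X_i)_{i\sqsubseteq j\in I}$ is a projective system of topological spaces in which every $X_i$ is coherent and sober, then every projective limit of this system in the category of topological spaces is coherent and sober.
   Context: A projective system of topological spaces consists of a directed preordered set $(I,\sqsubseteq)$, spaces $X_i$ and continuous maps $p_{ij}\colon X_j\to X_i$ for $i\sqsubseteq j$ with $p_{ii}=\mathrm{id}$ and $p_{ij}\circ p_{jk}=p_{ik}$; its projective limit is its limit in the category of topological spaces (canonically, the subspace of $\prod_i X_i$ of tuples $\vec x$ with $p_{ij}(x_j)=x_i$ for all $i\sqsubseteq j$). A subset is saturated if it equals the intersection of its open neighbourhoods (equivalently, it is upward closed in the specialization preorder $x\le y$ iff every open neighbourhood of $x$ contains $y$). Compactness assumes no separation axiom. A space is coherent if the intersection of any two compact saturated subsets is compact. A space is sober if it is $T_0$ and every irreducible closed subset (non-empty closed set not contained in the union of two closed sets unless contained in one of them) is the closure of a single point. *)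

From HB Require Import structures.
From mathcomp Require Import all_boot all_order.
From mathcomp Require Import boolp classical_sets topology.
Set Implicit Arguments. Unset Strict Implicit. Unset Printing Implicit Defensive.
Local Open Scope classical_set_scope.

Definition saturated (T : topologicalType) (A : set T) : Prop :=
  A = \bigcap_(U in [set U : set T | open U /\ A `<=` U]) U.

Definition coherent (T : topologicalType) : Prop :=
  forall A B : set T, compact A -> saturated A -> compact B -> saturated B ->
    compact (A `&` B).

Definition irreducible_closed (T : topologicalType) (F : set T) : Prop :=
  [/\ closed F, F !=set0 &
    forall F1 F2 : set T, closed F1 -> closed F2 -> F `<=` F1 `|` F2 ->
      F `<=` F1 \/ F `<=` F2].

Definition sober (T : topologicalType) : Prop :=
  @kolmogorov_space T /\
  forall F : set T, irreducible_closed F -> exists x : T, F = closure [set x].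

Definition directed_preorder (I : Type) (le : I -> I -> Prop) : Prop :=
  [/\ (forall i, le i i),
      (forall i j k, le i j -> le j k -> le i k),
      inhabited I &
      (forall i j, exists k, le i k /\ le j k)].

Definition projective_system (I : Type) (le : I -> I -> Prop)
  (X : I -> topologicalType) (p : forall i j, le i j -> X j -> X i) : Prop :=
  [/\ (forall i j (h : le i j), continuous (p i j h)),
      (forall i (h : le i i) (x : X i), p i i h x = x) &
      (forall i j k (hij : le i j) (hjk : le j k) (hik : le i k) (x : X k),
          p i j hij (p j k hjk x) = p i k hik x)].

Definition is_cone (I : Type) (le : I -> I -> Prop)
  (X : I -> topologicalType) (p : forall i j, le i j -> X j -> X i)
  (L : topologicalType) (q : forall i, L -> X i) : Prop :=
  (forall i, continuous (q i)) /\
  (forall i j (h : le i j) (x : L), p i j h (q j x) = q i x).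

Definition is_projective_limit (I : Type) (le : I -> I -> Prop)
  (X : I -> topologicalType) (p : forall i j, le i j -> X j -> X i)
  (L : topologicalType) (q : forall i, L -> X i) : Prop :=
  is_cone p q /\
  forall (Z : topologicalType) (r : forall i, Z -> X i), is_cone p r ->
    exists f : Z -> L, [/\ continuous f, (forall i z, q i (f z) = r i z) &
      forall g : Z -> L, continuous g -> (forall i z, q i (g z) = r i z) ->
        forall z, g z = f z].

From HB Require Import structures.
From mathcomp Require Import all_boot all_order.
From mathcomp Require Import boolp classical_sets topology.

(* Sobriety: an irreducible closed set F of the limit projects to the
   irreducible closed sets closure (q_i F); their generic points form a
   thread, i.e. a point of the limit, and it is a generic point of F.

   Coherence: a compact saturated K of the limit is the intersection of the
   preimages of the saturations of its projections, so A `&` B is the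
   intersection of the q_i^-1 Q_i, where
   Q_i := saturation (q_i A) `&` saturation (q_i B)
   is compact saturated by coherence of X_i.  Such an intersection is compact:
   given a proper filter G containing it, Zorn's lemma gives a minimal family
   of closed sets C_i, below the closures of the projections of G, meeting
   Q_i and stable under the bonding maps.  Minimality forces each C_i to be
   irreducible with C_i = closure (p_ij C_j), so their generic points form a
   thread; the corresponding point of the limit is a cluster point of G, and
   lies over every Q_i since the Q_i are saturated. *)

Local Open Scope classical_set_scope.

Section Closure.
Context {T : topologicalType}.

Lemma closure_sub_closed {A C : set T} : closed C -> A `<=` C -> closure A `<=` C.
Proof. by move=> cC AC; rewrite (closure_id C).1 //; exact: closureS. Qed.

Lemma closed_forall {J : Type} {f : J -> set T} :
  (forall j, closed (f j)) -> closed [set x | forall j, f j x].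
Proof.
move=> fclosed; have := closed_bigI (D := setT) (fun j _ => fclosed j).
by congr closed; apply/seteqP; split => x xf j //; exact: xf.
Qed.

Lemma closure1_open {U : set T} {x y : T} :
  open U -> U y -> closure [set x] y -> U x.
Proof.
move=> oU Uy /(_ U (open_nbhs_nbhs (conj oU Uy))) [z [-> //]].
Qed.

Lemma closure1_inj {x y : T} : kolmogorov_space T ->
  closure [set x] = closure [set y] -> x = y.
Proof.
move=> T0 exy; apply/eqP/negP => /negP /T0 [A [[]|[]]]; rewrite !inE => nA nA'.
- have : closure [set y] x by rewrite -exy; exact: subset_closure.
  by move=> /(_ A nA) [z [zy Az]]; apply: nA'; rewrite -zy.
- have : closure [set x] y by rewrite exy; exact: subset_closure.
  by move=> /(_ A nA) [z [zx Az]]; apply: nA'; rewrite -zx.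
Qed.

End Closure.

Section ContinuousImage.
Context {S T : topologicalType} {f : S -> T}.
Hypothesis f_continuous : continuous f.

Lemma image_closure_sub {A : set S} : f @` closure A `<=` closure (f @` A).
Proof.
move=> _ [x Ax <-] N /f_continuous /Ax [y [Ay Ny]].
by exists (f y); split => //; exists y.
Qed.

Lemma closure_image_closure {A : set S} :
  closure (f @` closure A) = closure (f @` A).
Proof.
apply/seteqP; split; last by apply/closureS/image_subset/subset_closure.
apply: closure_sub_closed; [exact: closed_closure|exact: image_closure_sub].
Qed.

Lemma irreducible_closed_closure_image {F : set S} :
  irreducible_closed F -> irreducible_closed (closure (f @` F)).
Proof.
move=> [cF [x Fx] irrF]; split; first exact: closed_closure.
  by exists (f x); apply: subset_closure; exists x.
move=> F1 F2 cF1 cF2 sub.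
have /irrF : F `<=` f @^-1` F1 `|` f @^-1` F2.
  by move=> y Fy; apply: sub; apply: subset_closure; exists y.
case=> [||FF1|FF2].
- by apply: preimage_closed cF1 => y _; exact: f_continuous.
- by apply: preimage_closed cF2 => y _; exact: f_continuous.
- by left; apply: closure_sub_closed cF1 _ => _ [y /FF1 ? <-].
- by right; apply: closure_sub_closed cF2 _ => _ [y /FF2 ? <-].
Qed.

End ContinuousImage.

Section Compactness.
Context {T : topologicalType}.

Lemma compact_closure_filtered {Q : set T} {B : set (set T)} :
  compact Q -> B !=set0 ->
  (forall b1 b2, B b1 -> B b2 -> exists2 b3, B b3 & b3 `<=` b1 `&` b2) ->
  (forall b, B b -> b `&` Q !=set0) ->
  exists2 y, Q y & forall b, B b -> closure b y.
Proof.
move=> cQ [b0 Bb0] Bfil BQ.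
have F_filter : Filter (filter_from B (fun b => b `&` Q)).
  apply: filter_from_filter; first by exists b0.
  move=> b1 b2 Bb1 Bb2; have [b3 Bb3 sb3] := Bfil _ _ Bb1 Bb2.
  by exists b3 => // x [/sb3 [? ?] ?].
have F_proper : ProperFilter (filter_from B (fun b => b `&` Q)).
  exact: filter_from_proper.
have [|y [Qy yF]] := cQ _ F_proper.
  by exists b0 => // x [].
exists y => // b Bb N Ny.
have [z [[bz _] Nz]] := yF (b `&` Q) N (ex_intro2 _ _ b Bb (fun x h => h)) Ny.
by exists z.
Qed.

Lemma compact_closed_filtered {Q : set T} {B : set (set T)} :
  compact Q -> B !=set0 ->
  (forall b1 b2, B b1 -> B b2 -> exists2 b3, B b3 & b3 `<=` b1 `&` b2) ->
  (forall b, B b -> closed b) -> (forall b, B b -> b `&` Q !=set0) ->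
  exists2 y, Q y & forall b, B b -> b y.
Proof.
move=> cQ B0 Bfil Bclosed BQ.
have [y Qy yB] := compact_closure_filtered cQ B0 Bfil BQ.
by exists y => // b Bb; rewrite (closure_id b).1; [exact: yB|exact: Bclosed].
Qed.

Lemma compact_directed_cover {J : Type} {D : set J} {f : J -> set T} {Q : set T} :
  compact Q -> D !=set0 -> (forall j, D j -> open (f j)) ->
  (forall j k, D j -> D k -> exists2 l, D l & f j `|` f k `<=` f l) ->
  Q `<=` \bigcup_(j in D) f j -> exists2 j, D j & Q `<=` f j.
Proof.
move=> cQ [j0 Dj0] fopen fdir Qcover; apply: contrapT => noj.
have [||||y Qy yB] := compact_closed_filtered (B := [set ~` f j | j in D]) cQ.
- by exists (~` f j0); exists j0.
- move=> _ _ [j Dj <-] [k Dk <-]; have [l Dl sl] := fdir _ _ Dj Dk.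
  exists (~` f l); first by exists l.
  by move=> x nfx; split => fx; apply: nfx; apply: sl; [left|right].
- by move=> _ [j Dj <-]; exact: open_closedC (fopen j Dj).
- move=> _ [j Dj <-]; apply: contrapT => Qf; apply: noj; exists j => // x Qx.
  by apply: contrapT => nfx; apply: Qf; exists x.
have [j Dj fy] := Qcover y Qy.
by apply: (yB (~` f j)) => //; exists j.
Qed.

End Compactness.

Section Saturation.
Context {T : topologicalType}.

Definition saturation (S : set T) :=
  \bigcap_(U in [set U | open U /\ S `<=` U]) U.

Lemma sub_saturation {S : set T} : S `<=` saturation S.
Proof. by move=> x Sx U [_ SU]; exact: SU. Qed.

Lemma saturation_sub_open {S U : set T} :
  open U -> S `<=` U -> saturation S `<=` U.
Proof. by move=> oU SU x; apply. Qed.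

Lemma saturated_saturation (S : set T) : saturated (saturation S).
Proof.
apply/seteqP; split => x; first by move=> Sx U [_ SU]; exact: SU.
by move=> Sx U [oU SU]; apply: Sx; split => //; exact: saturation_sub_open.
Qed.

Lemma saturatedI {A B : set T} :
  saturated A -> saturated B -> saturated (A `&` B).
Proof.
move=> sA sB; apply/seteqP; split => x; first by move=> ABx U [_]; apply.
move=> ABx; split.
  by rewrite sA => U [oU AU]; apply: ABx; split => // y [Ay _]; exact: AU.
by rewrite sB => U [oU BU]; apply: ABx; split => // y [_ By]; exact: BU.
Qed.

Lemma saturated_closure1 {A : set T} {x y : T} :
  saturated A -> A y -> closure [set x] y -> A x.
Proof.
by move=> sA Ay yx; rewrite sA => U [oU AU]; exact: closure1_open oU (AU y Ay) yx.
Qed.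

Lemma saturation_specialization {S : set T} {x : T} :
  saturation S x -> exists2 s, S s & closure [set x] s.
Proof.
move=> Sx; apply: contrapT => noS.
pose W := \bigcup_(U in [set U | open U /\ ~ U x]) U.
have oW : open W by apply: bigcup_open => U [].
suff /(Sx W) [U [_ nUx] Ux] : open W /\ S `<=` W by [].
split => // s Ss; have : ~ closure [set x] s by move=> sx; apply: noS; exists s.
move=> /existsNP [N /not_implyP [+ nN]]; rewrite nbhsE => -[U [oU Us] UN].
by exists U => //; split => // Ux; apply: nN; exists x; split => //; exact: UN.
Qed.

Lemma compact_saturation {S : set T} : compact S -> compact (saturation S).
Proof.
move=> cS F PF FS.
pose below (E : set T) := [set s | exists2 e, E e & closure [set e] s].
have [|||s Ss sF] := compact_closure_filtered (B := [set below E | E in F]) cS.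
- by exists (below setT); exists setT => //; exact: filterT.
- move=> _ _ [E1 FE1 <-] [E2 FE2 <-]; exists (below (E1 `&` E2)).
    by exists (E1 `&` E2) => //; exact: filterI.
  by move=> y [e [E1e E2e] ey]; split; exists e.
- move=> _ [E FE <-]; have [e [Ee Se]] := filter_ex (filterI FE FS).
  by have [s Ss es] := saturation_specialization Se; exists s; split => //; exists e.
exists s; split; first exact: sub_saturation.
move=> E N FE; rewrite nbhsE => -[W [oW Ws] WN].
have [t [[e Ee et] Wt]] := sF (below E) (ex_intro2 _ _ E FE erefl) W
  (open_nbhs_nbhs (conj oW Ws)).
by exists e; split => //; apply: WN; exact: closure1_open oW Wt et.
Qed.

End Saturation.

Lemma image_saturation_sub {S T : topologicalType} {f : S -> T} {A : set S} :
  continuous f -> f @` saturation A `<=` saturation (f @` A).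
Proof.
move=> fc _ [x Ax <-] U [oU AU]; apply: (Ax (f @^-1` U)); split.
  by apply: open_comp oU => y _; exact: fc.
by move=> y Ay; apply: AU; exists y.
Qed.

Section ProjectiveSystem.
Context {I : Type} {le : I -> I -> Prop} {X : I -> topologicalType}
  {p : forall i j, le i j -> X j -> X i}.
Hypothesis le_directed : directed_preorder le.
Hypothesis p_system : projective_system p.

Lemma directed_refl i : le i i.
Proof. by case: le_directed. Qed.

Lemma directed_trans {i j k} : le i j -> le j k -> le i k.
Proof. by case: le_directed => _ t _ _; exact: t. Qed.

Lemma directed_inhabited : inhabited I.
Proof. by case: le_directed. Qed.

Lemma directed_ub i j : exists k, le i k /\ le j k.
Proof. by case: le_directed => _ _ _; exact. Qed.

Lemma p_continuous {i j} (h : le i j) : continuous (p i j h).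
Proof. by case: p_system => pc _ _; exact: pc. Qed.

Lemma p_comp {i j k} (hij : le i j) (hjk : le j k) (hik : le i k) x :
  p i j hij (p j k hjk x) = p i k hik x.
Proof. by case: p_system => _ _; exact. Qed.

Lemma p_open {i j} (h : le i j) {U : set (X i)} :
  open U -> open (p i j h @^-1` U).
Proof. by move=> oU; apply: open_comp oU => x _; exact: p_continuous. Qed.

Definition thread (xs : forall i, X i) :=
  forall i j (h : le i j), p i j h (xs j) = xs i.

Lemma generic_points_thread {C : forall i, set (X i)} :
  (forall i, sober (X i)) -> (forall i, irreducible_closed (C i)) ->
  (forall i j (h : le i j), C i = closure (p i j h @` C j)) ->
  exists2 xs, thread xs & forall i, C i = closure [set xs i].
Proof.
move=> Xsober Cirr Cimage.
pose xs i := projT1 (cid ((Xsober i).2 _ (Cirr i))).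
have xsE i : C i = closure [set xs i] := projT2 (cid ((Xsober i).2 _ (Cirr i))).
exists xs => // i j h; apply: closure1_inj (Xsober i).1 _.
by rewrite -xsE (Cimage i j h) (xsE j) closure_image_closure ?image_set1 //;
  exact: p_continuous.
Qed.

Section ClosedSubsystems.
Variable Q : forall i, set (X i).
Hypothesis Q_compact : forall i, compact (Q i).
Hypothesis Q_thread : forall i j (h : le i j) y, Q j y -> Q i (p i j h y).

Definition closed_subsystem (C : forall i, set (X i)) :=
  [/\ forall i, closed (C i), forall i, C i `&` Q i !=set0 &
      forall i j (h : le i j), p i j h @` C j `<=` C i].

Definition minimal_subsystem (C : forall i, set (X i)) :=
  closed_subsystem C /\ forall D, closed_subsystem D ->
    (forall i, D i `<=` C i) -> forall i, C i `<=` D i.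

Lemma closed_subsystem_bigcap {A : set (forall i, set (X i))} :
  A !=set0 -> (forall C, A C -> closed_subsystem C) ->
  (forall C D, A C -> A D ->
     (forall i, C i `<=` D i) \/ (forall i, D i `<=` C i)) ->
  closed_subsystem (fun i => \bigcap_(C in A) C i).
Proof.
move=> [C0 AC0] Asub Atot; split.
- by move=> i; apply: closed_bigI => C /Asub [].
- move=> i; have [||||y Qy yA] :=
    compact_closed_filtered (B := [set C i | C in A]) (Q_compact i).
  + by exists (C0 i); exists C0.
  + move=> _ _ [C AC <-] [D AD <-]; have [CD|DC] := Atot _ _ AC AD.
    * by exists (C i); [exists C|move=> x Cx; split => //; exact: CD].
    * by exists (D i); [exists D|move=> x Dx; split => //; exact: DC].
  + by move=> _ [C /Asub [] + _ _ <-].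
  + by move=> _ [C /Asub [_ + _] <-].
  by exists y; split => // C AC; apply: yA; exists C.
- move=> i j h _ [y Ay <-] C AC; have [_ _ Cp] := Asub C AC.
  by apply: (Cp i j h); exists y => //; exact: Ay.
Qed.

Lemma exists_minimal_subsystem {C0 : forall i, set (X i)} :
  closed_subsystem C0 ->
  exists2 C, minimal_subsystem C & forall i, C i `<=` C0 i.
Proof.
move=> C0sub.
pose Sub := {C | closed_subsystem C /\ forall i, C i `<=` C0 i}.
pose R (C D : Sub) := `[< forall i, sval D i `<=` sval C i >].
have [||A Atot|[C [Csub CC0]] Cmax] :=
  @ZL_preorder Sub (exist _ C0 (conj C0sub (fun i => @subset_refl _ _))) R.
- by move=> C; apply/asboolP => i x.
- by move=> C D E /asboolP CD /asboolP DE; apply/asboolP => i x /DE /CD.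
- pose A' := [set C | C = C0 \/ exists2 D, A D & C = sval D].
  have A'sub : closed_subsystem (fun i => \bigcap_(C in A') C i).
    apply: closed_subsystem_bigcap; first by exists C0; left.
      by move=> C [->|[D _ ->]] //; case: (svalP D).
    move=> C D [->|[C' AC' ->]] [->|[D' AD' ->]].
    + by left => i x.
    + by right; case: (svalP D').
    + by left; case: (svalP C').
    + by case: (Atot _ _ AC' AD') => /asboolP; [right|left].
  have A'C0 i : \bigcap_(C in A') C i `<=` C0 i by move=> x; apply; left.
  exists (exist _ (fun i => \bigcap_(C in A') C i) (conj A'sub A'C0)).
  move=> D AD; apply/asboolP => i x; apply.
  by right; exists D.
exists C => //; split => // D Dsub DC i.
have DC0 i' : D i' `<=` C0 i' by move=> x /DC /CC0.
suff /asboolP : R (exist _ D (conj Dsub DC0)) (exist _ C (conj Csub CC0)) by [].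
by apply: Cmax; apply/asboolP.
Qed.

Definition meets_images (C : forall i, set (X i)) {i} (F : set (X i)) :=
  forall m (h : le i m), exists y, [/\ C m y, Q m y & F (p i m h y)].

Definition shadow (C : forall i, set (X i)) {i} (F : set (X i)) {k m}
    (hkm : le k m) (him : le i m) : set (X k) :=
  closure (p k m hkm @` (C m `&` p i m him @^-1` F)).

Definition restrict (C : forall i, set (X i)) {i} (F : set (X i)) k : set (X k) :=
  [set y | forall m (hkm : le k m) (him : le i m), shadow C F hkm him y].

Section Restriction.
Context {C : forall i, set (X i)} {i : I} {F : set (X i)}.
Hypothesis C_subsystem : closed_subsystem C.

Lemma shadow_anti {k m m'} (hkm : le k m) (him : le i m) (hkm' : le k m')
    (him' : le i m') : le m m' -> shadow C F hkm' him' `<=` shadow C F hkm him.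
Proof.
have [_ _ Cp] := C_subsystem; move=> hmm'.
apply: closureS => _ [z [Cz Fz] <-]; exists (p m m' hmm' z); last exact: p_comp.
split; first by apply: (Cp m m' hmm'); exists z.
by rewrite /= p_comp.
Qed.

Lemma shadow_sub {k m} (hkm : le k m) (him : le i m) :
  shadow C F hkm him `<=` C k.
Proof.
have [Cclosed _ Cp] := C_subsystem.
apply: closure_sub_closed (Cclosed k) _ => _ [z [Cz _] <-].
by apply: (Cp k m hkm); exists z.
Qed.

Lemma restrict_sub k : restrict C F k `<=` C k.
Proof.
have [m [hkm him]] := directed_ub k i.
by move=> y /(_ m hkm him); exact: shadow_sub.
Qed.

Lemma restrict_sub_closed : closed F -> restrict C F i `<=` F.
Proof.
move=> Fclosed y /(_ i (directed_refl i) (directed_refl i)).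
by apply: (closure_sub_closed Fclosed) => _ [z [_ Fz] <-].
Qed.

Lemma p_restrict {k j} (h : le k j) :
  p k j h @` restrict C F j `<=` restrict C F k.
Proof.
move=> _ [y Fy <-] m hkm him; have [m' [hmm' hjm']] := directed_ub m j.
have him' := directed_trans him hmm'.
apply: (shadow_anti hkm him (directed_trans hkm hmm') him' hmm').
have := image_closure_sub (p_continuous h) _
  (ex_intro2 _ _ y (Fy m' hjm' him') erefl).
by apply: closureS => _ [_ [z Fz <-] <-]; exists z => //; exact/esym/p_comp.
Qed.

Lemma closed_subsystem_restrict :
  meets_images C F -> closed_subsystem (restrict C F).
Proof.
move=> CF; split; last by move=> k j h; exact: p_restrict.
- by move=> k; do 3!apply: closed_forall => ?; exact: closed_closure.
move=> k; have [m0 [hkm0 him0]] := directed_ub k i.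
have [||||y Qy yB] := compact_closed_filtered (Q_compact k)
  (B := [set b | exists m (hkm : le k m) (him : le i m), b = shadow C F hkm him]).
- by exists (shadow C F hkm0 him0); exists m0, hkm0, him0.
- move=> _ _ [m1 [hkm1 [him1 ->]]] [m2 [hkm2 [him2 ->]]].
  have [m [a b]] := directed_ub m1 m2.
  exists (shadow C F (directed_trans hkm1 a) (directed_trans him1 a)).
    by exists m, (directed_trans hkm1 a), (directed_trans him1 a).
  by move=> y Fy; split; [exact: shadow_anti hkm1 him1 _ _ a _ Fy|
                         exact: shadow_anti hkm2 him2 _ _ b _ Fy].
- by move=> _ [m [hkm [him ->]]]; exact: closed_closure.
- move=> _ [m [hkm [him ->]]]; have [y [Cy Qy Fy]] := CF m him.
  exists (p k m hkm y); split; last exact: Q_thread.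
  by apply: subset_closure; exists y.
by exists y; split => // m hkm him; apply: yB; exists m, hkm, him.
Qed.

End Restriction.

Lemma minimal_subsystem_sub {C : forall i, set (X i)} {i} {F : set (X i)} :
  minimal_subsystem C -> closed F -> meets_images C F -> C i `<=` F.
Proof.
move=> [Csub Cmin] Fclosed CF.
have := Cmin _ (closed_subsystem_restrict Csub CF) (restrict_sub Csub) i.
by move=> /subset_trans; apply; exact: restrict_sub_closed.
Qed.

Lemma minimal_subsystem_irreducible {C : forall i, set (X i)} i :
  minimal_subsystem C -> irreducible_closed (C i).
Proof.
move=> Cmin; have [[Cclosed CQ Cp] _] := Cmin.
split => //; first by have [y [Cy _]] := CQ i; exists y.
move=> F1 F2 cF1 cF2 CF12.
suff [o1|o2] : meets_images C F1 \/ meets_images C F2.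
- by left; exact: minimal_subsystem_sub.
- by right; exact: minimal_subsystem_sub.
apply: contrapT => /not_orP [/existsNP [m1 /existsNP [h1 /forallNP n1]]].
move=> /existsNP [m2 /existsNP [h2 /forallNP n2]].
have [m [a b]] := directed_ub m1 m2.
have [y [Cy Qy]] := CQ m.
have /CF12 [F1y|F2y] : C i (p i m (directed_trans h1 a) y).
  by apply: (Cp i m (directed_trans h1 a)); exists y.
- apply: (n1 (p m1 m a y)); split; [by apply: (Cp m1 m); exists y|exact: Q_thread|].
  by rewrite (p_comp h1 a (directed_trans h1 a)).
- apply: (n2 (p m2 m b y)); split; [by apply: (Cp m2 m); exists y|exact: Q_thread|].
  by rewrite (p_comp h2 b (directed_trans h1 a)).
Qed.

Lemma minimal_subsystem_closure_image {C : forall i, set (X i)} {i j}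
    (h : le i j) :
  minimal_subsystem C -> C i = closure (p i j h @` C j).
Proof.
move=> Cmin; have [[Cclosed CQ Cp] _] := Cmin.
apply/seteqP; split; last exact: closure_sub_closed (Cclosed i) (Cp i j h).
apply: minimal_subsystem_sub Cmin (@closed_closure _ _) _ => m him.
have [m' [a b]] := directed_ub m j.
have [y [Cy Qy]] := CQ m'.
exists (p m m' a y); split; [by apply: (Cp m m'); exists y|exact: Q_thread|].
rewrite (p_comp him a (directed_trans him a)) -(p_comp h b (directed_trans him a)).
by apply: subset_closure; exists (p j m' b y) => //; apply: (Cp j m'); exists y.
Qed.

End ClosedSubsystems.

Section Limit.
Context {L : topologicalType} {q : forall i, L -> X i}.
Hypothesis q_limit : is_projective_limit p q.

Lemma q_continuous i : continuous (q i).
Proof. by case: q_limit => [[qc _] _]; exact: qc. Qed.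

Lemma q_open i {U : set (X i)} : open U -> open (q i @^-1` U).
Proof. by move=> oU; apply: open_comp oU => x _; exact: q_continuous. Qed.

Lemma p_q {i j} (h : le i j) x : p i j h (q j x) = q i x.
Proof. by case: q_limit => [[_ pq] _]; exact: pq. Qed.

Lemma image_p_q {i j} (h : le i j) (A : set L) :
  p i j h @` (q j @` A) = q i @` A.
Proof.
by rewrite image_comp (_ : p i j h \o q j = q i) //; apply/funext => x; exact: p_q.
Qed.

Lemma q_inj {x y : L} : (forall i, q i x = q i y) -> x = y.
Proof.
move=> qxy.
have cone : is_cone p (fun i (_ : L) => q i x).
  by split => [i|i j h _]; [exact: cst_continuous|exact: p_q].
have [f [_ _ funiq]] := q_limit.2 L _ cone.
have /= -> := funiq (fun=> x) (@cst_continuous _ _ x) (fun _ _ => erefl) x.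
by have /= -> := funiq (fun=> y) (@cst_continuous _ _ y)
  (fun i _ => esym (qxy i)) x.
Qed.

Lemma q_thread_surj {xs : forall i, X i} :
  thread xs -> exists x, forall i, q i x = xs i.
Proof.
move=> xs_thread; have [i0] := directed_inhabited.
have cone : is_cone p (fun i (_ : X i0) => xs i).
  by split => [i|i j h _]; [exact: cst_continuous|exact: xs_thread].
have [f [_ fq _]] := q_limit.2 (X i0) _ cone.
by exists (f (xs i0)) => i; exact: fq.
Qed.

Definition initial_open (A : set L) := forall x, A x ->
  exists i (U : set (X i)), [/\ open U, U (q i x) & q i @^-1` U `<=` A].

Definition initial_topology : Type := L.
HB.instance Definition _ := Choice.on initial_topology.

Lemma initial_openT : initial_open setT.
Proof.
move=> x _; have [i] := directed_inhabited.
by exists i, setT; split => //; exact: openT.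
Qed.

Lemma initial_openI : setI_closed initial_open.
Proof.
move=> A B oA oB x [Ax Bx].
have [i [U [oU Ux UA]]] := oA x Ax; have [j [V [oV Vx VB]]] := oB x Bx.
have [k [hik hjk]] := directed_ub i j.
exists k, (p i k hik @^-1` U `&` p j k hjk @^-1` V); split.
- by apply: openI; exact: p_open.
- by split; rewrite /= p_q.
- move=> z [Uz Vz]; split.
  + by apply: UA; rewrite /= -(p_q hik).
  + by apply: VB; rewrite /= -(p_q hjk).
Qed.

Lemma initial_open_bigU (J : Type) (f : J -> set initial_topology) :
  (forall j, initial_open (f j)) -> initial_open (\bigcup_j f j).
Proof.
move=> fopen x [j _ fx]; have [i [U [oU Ux Uf]]] := fopen j x fx.
by exists i, U; split => // z /Uf fz; exists j.
Qed.

HB.instance Definition _ := isOpenTopological.Build initial_topology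
  initial_openT initial_openI initial_open_bigU.

Lemma open_initial_open {A : set L} : open A -> initial_open A.
Proof.
move=> oA.
have cone : is_cone p (fun i (z : initial_topology) => q i z).
  split => [i|i j h z]; last exact: p_q.
  apply/continuousP => U oU; suff : initial_open (q i @^-1` U) by [].
  by move=> x Ux; exists i, U; split.
have [f [fc fq _]] := q_limit.2 initial_topology _ cone.
have fid z : f z = z := q_inj (fun i => fq i z).
have : initial_open (f @^-1` A) := (continuousP _).1 fc A oA.
by congr initial_open; apply/seteqP; split => x; rewrite /= fid.
Qed.

Lemma q_closureE (A : set L) x :
  closure A x <-> forall i, closure (q i @` A) (q i x).
Proof.
split => [Ax i|Ax N].
  by have := image_closure_sub (q_continuous i) _ (ex_intro2 _ _ x Ax erefl).
rewrite (@nbhsE L x) => -[W [oW Wx] WN].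
have [i [U [oU Ux UW]]] := open_initial_open oW x Wx.
have [_ [[a Aa <-] Ua]] := Ax i U (open_nbhs_nbhs (conj oU Ux)).
by exists a; split => //; apply: WN; exact: UW.
Qed.

Lemma limit_generic_point {C : forall i, set (X i)} :
  (forall i, sober (X i)) -> (forall i, irreducible_closed (C i)) ->
  (forall i j (h : le i j), C i = closure (p i j h @` C j)) ->
  exists x, forall i, C i = closure [set q i x].
Proof.
move=> Xsober Cirr Cimage.
have [xs xs_thread xsE] := generic_points_thread Xsober Cirr Cimage.
have [x qx] := q_thread_surj xs_thread.
by exists x => i; rewrite qx.
Qed.

Lemma limit_kolmogorov : (forall i, kolmogorov_space (X i)) -> kolmogorov_space L.
Proof.
move=> XT0 x y /eqP xy.
have [i qxy] : exists i, q i x != q i y.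
  apply: contrapT => /forallNP qxy; apply: xy; apply: q_inj => i.
  by apply/eqP; apply: contrapT => /negP; exact: qxy.
have [A [[Ax nAy]|[Ay nAx]]] := XT0 i _ _ qxy; exists (q i @^-1` A).
- by left; rewrite !inE in Ax nAy *; split => //; exact: q_continuous Ax.
- by right; rewrite !inE in Ay nAx *; split => //; exact: q_continuous Ay.
Qed.

Lemma limit_sober : (forall i, sober (X i)) -> sober L.
Proof.
move=> Xsober; split; first by apply: limit_kolmogorov => i; case: (Xsober i).
move=> F Firr; have [Fclosed _ _] := Firr.
have [||x xE] := limit_generic_point (C := fun i => closure (q i @` F)) Xsober.
- by move=> i; exact: (irreducible_closed_closure_image (q_continuous i) Firr).
- by move=> i j h; rewrite closure_image_closure ?image_p_q //; exact: p_continuous.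
exists x; rewrite (closure_id F).1 //; apply/seteqP; split => y /q_closureE Fy.
- by apply/q_closureE => i; rewrite image_set1 -xE; exact: Fy.
- by apply/q_closureE => i; rewrite xE -image_set1; exact: Fy.
Qed.

Lemma compact_sub_open_cylinder {K W : set L} :
  compact K -> open W -> K `<=` W ->
  exists i (V : set (X i)), [/\ open V, K `<=` q i @^-1` V & q i @^-1` V `<=` W].
Proof.
move=> Kcompact Wopen KW.
pose D (iV : {i : I & set (X i)}) :=
  open (projT2 iV) /\ q (projT1 iV) @^-1` projT2 iV `<=` W.
have [||||[i V] [oV VW] KV] := compact_directed_cover (D := D)
  (f := fun iV => q (projT1 iV) @^-1` projT2 iV) Kcompact.
- have [i0] := directed_inhabited; exists (existT _ i0 set0).
  by split => //; exact: open0.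
- by move=> [i V] [oV _]; exact: q_open.
- move=> [i U] [j V] [oU UW] [oV VW]; have [k [hik hjk]] := directed_ub i j.
  exists (existT _ k (p i k hik @^-1` U `|` p j k hjk @^-1` V)).
    split; first by apply: openU; exact: p_open.
    move=> x [Ux|Vx].
    + by apply: UW; rewrite /= -(p_q hik).
    + by apply: VW; rewrite /= -(p_q hjk).
  by move=> x [Ux|Vx]; [left|right]; rewrite /= p_q.
- move=> x Kx; have [i [U [oU Ux UW]]] := open_initial_open Wopen x (KW x Kx).
  by exists (existT _ i U).
by exists i, V.
Qed.

Lemma compact_saturated_limitE {K : set L} : compact K -> saturated K ->
  K = [set x | forall i, saturation (q i @` K) (q i x)].
Proof.
move=> Kcompact Ksat; apply/seteqP; split => x.
  by move=> Kx i; apply: sub_saturation; exists x.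
move=> Kx; rewrite Ksat => W [Wopen KW].
have [i [V [Vopen KV VW]]] := compact_sub_open_cylinder Kcompact Wopen KW.
apply: VW; apply: (saturation_sub_open Vopen) (Kx i).
by move=> _ [y Ky <-]; exact: KV.
Qed.

Section CompactThreads.
Variable Q : forall i, set (X i).
Hypothesis Q_compact : forall i, compact (Q i).
Hypothesis Q_saturated : forall i, saturated (Q i).
Hypothesis Q_thread : forall i j (h : le i j) y, Q j y -> Q i (p i j h y).
Hypothesis X_sober : forall i, sober (X i).

Lemma closed_subsystem_closure_filter {G : set_system L} : ProperFilter G ->
  G [set x | forall i, Q i (q i x)] ->
  closed_subsystem Q (fun i => \bigcap_(S in G) closure (q i @` S)).
Proof.
move=> PG GK; split.
- by move=> i; apply: closed_bigI => S _; exact: closed_closure.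
- move=> i; have [||||y Qy yG] := compact_closed_filtered (Q_compact i)
    (B := [set closure (q i @` S) | S in G]).
  + by exists (closure (q i @` setT)); exists setT => //; exact: filterT.
  + move=> _ _ [S GS <-] [S' GS' <-]; exists (closure (q i @` (S `&` S'))).
      by exists (S `&` S') => //; exact: filterI.
    by move=> y Sy; split; apply: closureS Sy => _ [x [Sx S'x] <-]; exists x.
  + by move=> _ [S _ <-]; exact: closed_closure.
  + move=> _ [S GS <-]; have [x [Sx Kx]] := filter_ex (filterI GS GK).
    by exists (q i x); split; [apply: subset_closure; exists x|exact: Kx].
  by exists y; split => // S GS; apply: yG; exists S.
- move=> i j h _ [y Gy <-] S GS.
  have := image_closure_sub (p_continuous h) _ (ex_intro2 _ _ y (Gy S GS) erefl).
  by rewrite image_p_q.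
Qed.

Lemma compact_limit_preimage : compact [set x | forall i, Q i (q i x)].
Proof.
move=> G PG GK.
have [C Cmin CG] := exists_minimal_subsystem Q Q_compact
  (closed_subsystem_closure_filter PG GK).
have [x xE] := limit_generic_point X_sober
  (fun i => minimal_subsystem_irreducible Q Q_compact Q_thread i Cmin)
  (fun i j h => minimal_subsystem_closure_image Q Q_compact Q_thread h Cmin).
have Cx i : C i (q i x) by rewrite xE; exact: subset_closure.
exists x; split.
- move=> i; have [[_ CQ _] _] := Cmin; have [y [Cy Qy]] := CQ i.
  by rewrite xE in Cy; exact: saturated_closure1 (Q_saturated i) Qy Cy.
- move=> S N GS; apply: (q_closureE S x).2 => i.
  exact: CG i _ (Cx i) S GS.
Qed.

End CompactThreads.

Lemma limit_coherent : (forall i, coherent (X i)) -> (forall i, sober (X i)) ->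
  coherent L.
Proof.
move=> Xcoherent Xsober A B Acompact Asat Bcompact Bsat.
pose Q i := saturation (q i @` A) `&` saturation (q i @` B).
have -> : A `&` B = [set x | forall i, Q i (q i x)].
  rewrite {1}(compact_saturated_limitE Acompact Asat).
  rewrite {1}(compact_saturated_limitE Bcompact Bsat).
  apply/seteqP; split => x; first by move=> [xA xB] i; split.
  by move=> xQ; split => i; case: (xQ i).
have qK_compact i (K : set L) : compact K -> compact (saturation (q i @` K)).
  move=> Kcompact; apply: compact_saturation.
  exact: continuous_compact (continuous_subspaceT (q_continuous i)) Kcompact.
apply: compact_limit_preimage => //.
- move=> i; apply: Xcoherent; try exact: saturated_saturation.
  + exact: qK_compact Acompact.
  + exact: qK_compact Bcompact.
- by move=> i; apply: saturatedI; exact: saturated_saturation.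
- move=> i j h y [yA yB]; rewrite /Q -!(image_p_q h).
  by split; apply: (image_saturation_sub (p_continuous h)); exists y.
Qed.

End Limit.
End ProjectiveSystem.

Theorem theorem4p4 (I : Type) (le : I -> I -> Prop)
  (X : I -> topologicalType) (p : forall i j, le i j -> X j -> X i) :
  directed_preorder le ->
  projective_system p ->
  (forall i, coherent (X i) /\ sober (X i)) ->
  forall (L : topologicalType) (q : forall i, L -> X i),
    is_projective_limit p q -> coherent L /\ sober L.
Proof.
move=> le_directed p_system X_coherent_sober L q q_limit.
have X_coherent i := (X_coherent_sober i).1.
have X_sober i := (X_coherent_sober i).2.
split.
  exact: (limit_coherent le_directed p_system q_limit X_coherent X_sober).
exact: (limit_sober le_directed p_system q_limit X_sober).
Qed.
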